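(* Let $Q$ be a quiver without oriented cycles and $\mathbf D=k\tilde Q/\mathcal I$. If $M$ is a $\Delta$-filtered $\mathbf D$-module and $i$ is a sink of $Q$, then $\mathrm{Ext}^1_{\mathbf D}(M,\Delta(i))=0$.
   Context: $k$ is an algebraically closed field. $\tilde Q$ is the double of $Q$ (arrows $\alpha\in Q_1$ and reversed arrows $\alpha^*:t(\alpha)\to s(\alpha)$), paths composed right to left; $\mathcal I$ is the ideal of $k\tilde Q$ generated by $\alpha^*\alpha-\sum_{\gamma\in Q_1,t(\gamma)=s(\alpha)}\gamma\gamma^*$ ($\alpha\in Q_1$) and $\beta^*\alpha$ ($\alpha\ne\beta\in Q_1$ with $t(\alpha)=t(\beta)$). $\Delta(i)$ is the indecomposable projective $kQ$-module with simple top $L(i)$, regarded as a $\mathbf D$-module via the surjection $\mathbf D\to kQ$ killing all $\alpha^*$. A $\mathbf D$-module is $\Delta$-filtered if it has a chain of submodules whose successive quotients are isomorphic to modules $\Delta(j)$. A vertex is a sink if no arrow of $Q$ starts there, a source if no arrow of $Q$ ends there. *)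

From HB Require Import structures.
From mathcomp Require Import all_boot all_order all_algebra.
Set Implicit Arguments. Unset Strict Implicit. Unset Printing Implicit Defensive.
Import GRing.Theory.
Local Open Scope ring_scope.

Section Quiver.
Variables (k : fieldType) (V A : finType) (s t : A -> V).

(* A quiver Q: vertices V, arrows A, arrow a : s a -> t a.
   Paths are sequences of arrows, composed right to left:
   [:: a_n; ...; a_1] is the path a_n ... a_1 (first a_1). *)
Fixpoint is_path (u v : V) (p : seq A) : bool :=
  match p with
  | [::] => u == v
  | a :: q => (t a == v) && is_path u (s a) q
  end.

Definition acyclic : Prop := forall (v : V) (p : seq A), is_path v v p -> p = [::].

Definition is_sink (i : V) : bool := [forall a : A, s a != i].

Fixpoint pathsn (n : nat) (u v : V) {struct n} : seq (seq A) :=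
  match n with
  | 0 => if u == v then [:: [::]] else [::]
  | n'.+1 => flatten [seq [seq a :: q | q <- pathsn n' u (s a)] | a <- enum A & t a == v]
  end.

(* Basis of Delta(i) = kQ e_i : pairs (target vertex, path from i);
   paths of length < #|V| (all paths, when Q is acyclic). *)
Definition Dbasis (i : V) : seq (V * seq A) :=
  [seq (v, p) | v <- enum V, p <- flatten [seq pathsn n i v | n <- iota 0 #|V|]].

(* A finite-dimensional representation of the double quiver on k^rdim
   (row vectors, left action of a path p written m |-> m *m X_p, so that
   X_(q p) = X_p *m X_q): vertex idempotents, arrows a, reversed arrows a^*. *)
Record rep := Rep {
  rdim : nat;
  ridem : V -> 'M[k]_rdim;
  rarr : A -> 'M[k]_rdim;
  rdual : A -> 'M[k]_rdim }.

Definition is_Dmod (M : rep) : Prop :=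
  [/\ forall v w, ridem M v *m ridem M w = (if v == w then ridem M v else 0),
      \sum_(v : V) ridem M v = 1%:M,
      forall a, rarr M a = ridem M (s a) *m rarr M a *m ridem M (t a)
    & forall a, rdual M a = ridem M (t a) *m rdual M a *m ridem M (s a)]
  /\ (forall a, rarr M a *m rdual M a = \sum_(g | t g == s a) (rdual M g *m rarr M g))
  /\ (forall a b, a != b -> t a = t b -> rarr M a *m rdual M b = 0).

Definition is_hom (M N : rep) (f : 'M[k]_(rdim M, rdim N)) : Prop :=
  [/\ forall v, ridem M v *m f = f *m ridem N v,
      forall a, rarr M a *m f = f *m rarr N a
    & forall a, rdual M a *m f = f *m rdual N a].

Definition is_ses (N E M : rep) (f : 'M[k]_(rdim N, rdim E)) (g : 'M[k]_(rdim E, rdim M)) : Prop :=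
  [/\ is_hom f, is_hom g, row_free f, row_full g & (f == kermx g)%MS].

(* Delta(i): the indecomposable projective kQ-module P(i) = kQ e_i, with
   all reversed arrows acting by zero. *)
Definition Delta (i : V) : rep :=
  let B := Dbasis i in
  let d := (i, [::]) in
  @Rep (size B)
    (fun v => \matrix_(j, j') ((j == j') && ((nth d B j).1 == v))%:R)
    (fun a => \matrix_(j, j')
       ([&& (nth d B j).1 == s a, (nth d B j').1 == t a
          & (nth d B j').2 == a :: (nth d B j).2])%:R)
    (fun _ => 0).

(* Delta-filtered D-modules: M has a chain 0 = M_0 < M_1 < ... < M_r = M of
   submodules with M_j / M_(j-1) isomorphic to some Delta(l_j); unwound from
   the top: M_(r-1) embeds in M with cokernel Delta(l_r). *)
Inductive Dfiltered : rep -> Prop :=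
  | Dfilt0 (M : rep) : is_Dmod M -> rdim M = 0%N -> Dfiltered M
  | DfiltS (M' M : rep) (l : V) (f : 'M[k]_(rdim M', rdim M))
           (g : 'M[k]_(rdim M, rdim (Delta l))) :
      is_Dmod M -> @is_ses M' M (Delta l) f g -> Dfiltered M' -> Dfiltered M.

(* Ext^1_D(M, N) = 0 (Yoneda description): every extension
   0 -> N -> E -> M -> 0 of D-modules splits. *)
Definition Ext1_zero (M N : rep) : Prop :=
  forall (E : rep) (f : 'M[k]_(rdim N, rdim E)) (g : 'M[k]_(rdim E, rdim M)),
    is_Dmod E -> is_ses f g ->
    exists h : 'M[k]_(rdim M, rdim E), is_hom h /\ h *m g = 1%:M.

End Quiver.

From HB Require Import structures.
From mathcomp Require Import all_boot all_order all_algebra.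
Set Implicit Arguments. Unset Strict Implicit. Unset Printing Implicit Defensive.

(* Modules are row spaces k^n with right-acting matrices, so "the image of
   the structure map X" is the row space of X.  The proof has three parts.
   (1) Combinatorics of paths: in an acyclic quiver every path has fewer than
       #|V| arrows, so the basis Dbasis l of Delta(l) consists of ALL paths
       starting at l; a path starting at a sink is trivial, hence Delta(i) is
       the simple module S(i) when i is a sink.
   (2) Say M is arrow-injective at i if the map (m_a) |-> sum_a m_a a, from
       the direct sum of the spaces e_(s a) M over the arrows a ending at i,
       to M, is injective.  Delta(l) is arrow-injective (a path followed by an
       arrow is a new basis path), the property is stable under extensions,
       hence it holds for every Delta-filtered module.
   (3) Let 0 -> N -f-> E -g-> M -> 0 with N concentrated at the sink i and M
       arrow-injective at i.  The subspace J of E spanned by the e_v E (v <> i)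
       and by the images of all arrows and reversed arrows meets f(N) trivially
       (by (2)), so there is a linear retraction of f killing J; since every
       structure map of E lands in J, it is a D-homomorphism, and a
       homomorphic retraction of f yields a homomorphic section of g. *)

Section Paths.
Variables (V A : finType) (s t : A -> V).

Lemma path_split u v p1 p2 : is_path s t u v (p1 ++ p2) ->
  exists w, is_path s t u w p2 /\ is_path s t w v p1.
Proof.
elim: p1 v => [|a p1 IH] v /=; first by move=> H; exists v; split.
by case/andP=> Ht /IH [w [H1 H2]]; exists w; split => //; rewrite Ht.
Qed.

Definition path_end u (p : seq A) : V := if p is a :: _ then t a else u.

Lemma path_endE u v p : is_path s t u v p -> v = path_end u p.
Proof. by case: p => [|a q] /=; [move/eqP|case/andP=> /eqP]. Qed.

(* Every suffix (in composition order: every initial segment) of a path is a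
   path ending where the remaining part starts. *)
Lemma path_drop u v p n : is_path s t u v p ->
  is_path s t u (path_end u (drop n p)) (drop n p).
Proof.
rewrite -{1}(cat_take_drop n p) => /path_split [w [H _]].
by rewrite -(path_endE H).
Qed.

(* Pigeonhole: a path visiting #|V| + 1 vertices repeats one, producing an
   oriented cycle. *)
Lemma acyclic_path_size u v p : acyclic s t -> is_path s t u v p -> size p < #|V|.
Proof.
move=> Hac Hp; rewrite ltnNge; apply/negP => Hs.
set vs := [seq path_end u (drop n p) | n <- iota 0 (size p).+1].
have : ~~ uniq vs.
  apply/negP => /card_uniqP Hc.
  by have := max_card (mem vs); rewrite Hc size_map size_iota ltnNge Hs.
case/(uniqPn u) => n1 [n2 [Hlt Hn2]].
rewrite size_map size_iota in Hn2.
rewrite (nth_map 0) ?size_iota ?(ltn_trans Hlt) // (nth_map 0) ?size_iota //.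
rewrite !nth_iota ?(ltn_trans Hlt) // !add0n => Heq.
have E : drop n1 p = take (n2 - n1) (drop n1 p) ++ drop n2 p.
  by rewrite -{2}(subnK (ltnW Hlt)) -drop_drop cat_take_drop.
have := path_drop n1 Hp; rewrite {2}E => /path_split [w [Hw Hc]].
rewrite Heq -(path_endE Hw) in Hc.
have := Hac _ _ Hc => /(congr1 size); rewrite size_take size_drop.
case: ifP => _; first by move/eqP; rewrite subn_eq0 leqNgt Hlt.
move/eqP; rewrite subn_eq0 => H; have := leq_ltn_trans H Hlt.
by rewrite ltnNge -ltnS Hn2.
Qed.

Lemma mem_pathsn n u v p :
  (p \in pathsn s t n u v) = is_path s t u v p && (size p == n).
Proof.
elim: n v p => [|n IH] v p /=.
  case: (u =P v) => [->|Huv]; case: p => [|a q] //=; rewrite ?inE ?eqxx ?andbF //.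
  by case: eqP.
apply/flatten_mapP/idP.
  case=> a; rewrite mem_filter => /andP [Ha _] /mapP [q].
  by rewrite IH => /andP [Hq /eqP Hs] ->; rewrite /= Ha Hq Hs eqxx.
case: p => [|a q] /=; first by rewrite andbF.
move=> /andP [/andP [Ha Hq] Hs].
exists a; first by rewrite mem_filter Ha mem_enum.
by apply/mapP; exists q; rewrite // IH Hq.
Qed.

Lemma uniq_pathsn n u v : uniq (pathsn s t n u v).
Proof.
elim: n v => [|n IH] v /=; first by case: (u == v).
apply: (@allpairs_uniq_dep _ _ _ (fun a q => a :: q)).
- by rewrite filter_uniq // enum_uniq.
- by move=> a _; apply: IH.
by move=> [a q] [b r] _ _ /= [-> ->].
Qed.

Definition short_paths u v : seq (seq A) :=
  flatten [seq pathsn s t n u v | n <- iota 0 #|V|].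

Lemma mem_short_paths u v p : (p \in short_paths u v) -> is_path s t u v p.
Proof. by case/flatten_mapP => n _; rewrite mem_pathsn => /andP []. Qed.

Lemma mem_short_paths_acyclic u v p :
  acyclic s t -> (p \in short_paths u v) = is_path s t u v p.
Proof.
move=> Hac; apply/idP/idP => [|Hp]; first exact: mem_short_paths.
apply/flatten_mapP; exists (size p); last by rewrite mem_pathsn Hp eqxx.
by rewrite mem_iota add0n (acyclic_path_size Hac Hp).
Qed.

Lemma uniq_short_paths u v : uniq (short_paths u v).
Proof.
rewrite /short_paths; move: 0%N => m; elim: #|V| m => [|N IH] m //=.
rewrite cat_uniq uniq_pathsn IH andbT.
apply/hasPn => p /flatten_mapP [n]; rewrite mem_iota => /andP [Hn _].
rewrite mem_pathsn => /andP [_ /eqP Hs].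
by rewrite mem_pathsn negb_and Hs eqn_leq [(n <= _)%N]leqNgt Hn orbT.
Qed.

Lemma DbasisE i : Dbasis s t i = [seq (v, p) | v <- enum V, p <- short_paths i v].
Proof. by []. Qed.

Lemma uniq_Dbasis i : uniq (Dbasis s t i).
Proof.
rewrite DbasisE; apply: allpairs_uniq_dep; first exact: enum_uniq.
  by move=> v _; apply: uniq_short_paths.
by move=> [v p] [w q] _ _ /= [-> ->].
Qed.

Lemma mem_Dbasis i x : x \in Dbasis s t i -> is_path s t i x.1 x.2.
Proof.
rewrite DbasisE => /allpairsPdep [w [q [_ Hq ->]]]; exact: mem_short_paths.
Qed.

Lemma mem_Dbasis_acyclic i v p :
  acyclic s t -> ((v, p) \in Dbasis s t i) = is_path s t i v p.
Proof.
move=> Hac; rewrite DbasisE; apply/allpairsPdep/idP.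
  by case=> w [q [_ Hq [-> ->]]]; rewrite -(mem_short_paths_acyclic _ _ _ Hac).
by move=> Hp; exists v, p; rewrite mem_enum (mem_short_paths_acyclic _ _ _ Hac).
Qed.

Lemma sink_path i v p : is_sink s i -> is_path s t i v p -> p = [::] /\ v = i.
Proof.
move=> Hsk; elim: p v => [|a p IH] v /=; first by move/eqP.
by case/andP => _ /IH [-> E]; move/forallP: Hsk => /(_ a); rewrite E eqxx.
Qed.

End Paths.

Import GRing.Theory.
Local Open Scope ring_scope.

Section DeltaModules.
Variables (k : fieldType) (V A : finType) (s t : A -> V).

Local Notation Delta := (Delta k s t).

Lemma Delta_idem_row l v (x : 'rV[k]_(rdim (Delta l))) j :
  (x *m ridem (Delta l) v) 0 j =
  if (nth (l, [::]) (Dbasis s t l) j).1 == v then x 0 j else 0.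
Proof.
rewrite mxE (bigD1 j) //= big1 => [|j' Hj']; last by rewrite !mxE (negbTE Hj') mulr0.
by rewrite !mxE eqxx addr0; case: eqP; rewrite ?mulr1 ?mulr0.
Qed.

(* If the basis path j1 is the basis path j0 followed by the arrow a0, then
   the only arrow matrix entry in column j1 is the 1 at (a0, j0): a basis path
   is determined by its last arrow and the path before it. *)
Lemma Delta_arr_col l a0 (j0 j1 : 'I_(rdim (Delta l))) :
  let B := Dbasis s t l in let d := (l, [::]) in
  (nth d B j0).1 = s a0 -> nth d B j1 = (t a0, a0 :: (nth d B j0).2) ->
  forall a j, rarr (Delta l) a j j1 = ((a == a0) && (j == j0))%:R.
Proof.
move=> B d Hj0 Hj1 a j; rewrite mxE Hj1 /= -/B -/d eqseq_cons.
case: (a =P a0) => [->|Ha]; last first.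
  by rewrite (_ : (a0 == a) = false) ?andbF //; apply/eqP=> E; apply: Ha.
rewrite !eqxx /= -Hj0 -(inj_eq val_inj) /=.
rewrite -(nth_uniq d (ltn_ord j) (ltn_ord j0) (uniq_Dbasis s t l)).
by rewrite [nth d B j]surjective_pairing [nth d B j0]surjective_pairing xpair_eqE [X in _ && X]eq_sym.
Qed.

Lemma Dbasis_sink i j : is_sink s i -> (nth (i, [::]) (Dbasis s t i) j).1 = i.
Proof.
move=> Hsk; case: (ltnP j (size (Dbasis s t i))) => H; last by rewrite nth_default.
by have [_ ->] := sink_path Hsk (mem_Dbasis (mem_nth (i, [::]) H)).
Qed.

Definition concentrated_at (N : rep k V A) (i : V) : Prop :=
  [/\ forall v, ridem N v = if i == v then 1%:M else 0,
      forall a, rarr N a = 0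
    & forall a, rdual N a = 0].

Lemma Delta_sink_concentrated i : is_sink s i -> concentrated_at (Delta i) i.
Proof.
move=> Hsk; split=> [v|a|a] //; apply/matrixP => j j'; rewrite !mxE Dbasis_sink //.
  by case: (i == v); rewrite ?mxE ?andbT ?andbF.
have : s a != i by move/forallP: Hsk.
by rewrite eq_sym => /negbTE ->.
Qed.

End DeltaModules.

Section Splitting.
Variables (k : fieldType) (V A : finType).

Lemma retraction_killing m n p (f : 'M[k]_(m, n)) (J : 'M[k]_(p, n)) :
  row_free f -> (f :&: J)%MS == 0 ->
  exists2 phi : 'M[k]_(n, m),
    f *m phi = 1%:M & forall q (X : 'M_(q, n)), (X <= J)%MS -> X *m phi = 0.
Proof.
move=> Hfree /eqP HfJ.
have /row_freeP [psi Hpsi] : row_free (f *m cokermx J).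
  rewrite -kermx_eq0; apply/eqP; set W := kermx _.
  have HWf : (W *m f <= f :&: J)%MS.
    by rewrite sub_capmx submxMl submxE -mulmxA mulmx_ker eqxx.
  move: HWf; rewrite HfJ submx0 => /eqP HWf.
  by apply: (row_free_inj Hfree); rewrite mul0mx.
exists (cokermx J *m psi); first by rewrite mulmxA.
by move=> q X; rewrite submxE => /eqP HX; rewrite mulmxA HX mul0mx.
Qed.

Variables (N E M : rep k V A).
Variables (f : 'M[k]_(rdim N, rdim E)) (g : 'M[k]_(rdim E, rdim M)).
Hypothesis Hses : is_ses f g.

Lemma ses_comp0 : f *m g = 0.
Proof. by case: Hses => _ _ _ _ /andP [/sub_kermxP]. Qed.

Lemma ses_kerP q (x : 'M[k]_(q, rdim E)) : x *m g = 0 -> (x <= f)%MS.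
Proof. by move=> /sub_kermxP Hx; case: Hses => _ _ _ _ /andP [_]; apply: submx_trans. Qed.

Variable phi : 'M[k]_(rdim E, rdim N).
Hypothesis Hfphi : f *m phi = 1%:M.

(* The section of g attached to the retraction phi of f: lift by any linear
   section of g, then project away from f along the kernel of phi. *)
Definition section_of_retraction : 'M[k]_(rdim M, rdim E) :=
  pinvmx g *m (1%:M - phi *m f).

Lemma section_of_retractionK : section_of_retraction *m g = 1%:M.
Proof.
have Hfull : row_full g by case: Hses.
rewrite -mulmxA mulmxBl mul1mx -[phi *m f *m g]mulmxA ses_comp0 !mulmx0 subr0.
exact: mulVpmx.
Qed.

Lemma section_of_retraction_comm (XN : 'M[k]_(rdim N)) (XE : 'M[k]_(rdim E))
    (XM : 'M[k]_(rdim M)) :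
  XN *m f = f *m XE -> XE *m g = g *m XM -> XE *m phi = phi *m XN ->
  XM *m section_of_retraction = section_of_retraction *m XE.
Proof.
move=> Hf Hg Hphi; have Hfull : row_full g by case: Hses.
have Hpi : XE *m (1%:M - phi *m f) = (1%:M - phi *m f) *m XE.
  by rewrite mulmxBr mulmxBl mulmx1 mul1mx mulmxA Hphi -mulmxA Hf mulmxA.
set d := XM *m pinvmx g - pinvmx g *m XE.
have /submxP [w Hw] : (d <= f)%MS.
  apply: ses_kerP; rewrite mulmxBl -mulmxA mulVpmx // mulmx1.
  by rewrite -mulmxA Hg mulmxA mulVpmx // mul1mx subrr.
have Hdpi : d *m (1%:M - phi *m f) = 0.
  by rewrite Hw -mulmxA mulmxBr mulmx1 mulmxA Hfphi mul1mx subrr mulmx0.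
rewrite /section_of_retraction mulmxA (_ : XM *m pinvmx g = d + pinvmx g *m XE).
  by rewrite mulmxDl Hdpi add0r -mulmxA Hpi mulmxA.
by rewrite /d subrK.
Qed.

Lemma hom_retraction_splits :
  is_hom phi -> exists h : 'M[k]_(rdim M, rdim E), is_hom h /\ h *m g = 1%:M.
Proof.
case: Hses => [[Hf1 Hf2 Hf3] [Hg1 Hg2 Hg3] _ _ _] [Hp1 Hp2 Hp3].
exists section_of_retraction; split; last exact: section_of_retractionK.
by split=> [v|a|a]; apply: section_of_retraction_comm.
Qed.

End Splitting.

Section ArrowInjectivity.
Variables (k : fieldType) (V A : finType) (s t : A -> V).

Definition arrows_injective_at (M : rep k V A) (i : V) : Prop :=
  forall m : A -> 'rV[k]_(rdim M),
    (forall a, m a *m ridem M (s a) = m a) ->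
    \sum_(a | t a == i) m a *m rarr M a = 0 -> forall a, t a == i -> m a = 0.

Lemma arrows_injective_dim0 (M : rep k V A) i : rdim M = 0%N -> arrows_injective_at M i.
Proof. by move=> H0 m _ _ a _; apply/rowP => j; have := ltn_ord j; rewrite {2}H0. Qed.

(* In Delta(l) the coordinate of sum_a m_a a at the path a0 q is the
   coordinate of m_a0 at q, and every path q is in the basis. *)
Lemma arrows_injective_Delta l i :
  acyclic s t -> arrows_injective_at (Delta k s t l) i.
Proof.
move=> Hac m Hm Hsum a0 Ha0; apply/rowP => j0; rewrite mxE -(Hm a0) Delta_idem_row.
set B := Dbasis s t l; set d := (l, [::]); case: eqP => // Hj0.
have Hq : is_path s t l (s a0) (nth d B j0).2.
  by rewrite -Hj0; apply: mem_Dbasis; apply: mem_nth.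
have Hin : (t a0, a0 :: (nth d B j0).2) \in B by rewrite mem_Dbasis_acyclic //= eqxx Hq.
pose j1 : 'I_(size B) := Ordinal (etrans (index_mem _ _) Hin).
have Hj1 : nth d B j1 = (t a0, a0 :: (nth d B j0).2) by rewrite nth_index.
have Hcol := Delta_arr_col Hj0 Hj1.
have := congr1 (fun X : 'rV_(size B) => X 0 j1) Hsum.
rewrite /= summxE (bigD1 a0) //= big1 => [|a /andP [_ Ha]]; last first.
  by rewrite mxE big1 // => j _; rewrite Hcol (negbTE Ha) mulr0.
rewrite addr0 mxE (bigD1 j0) //= big1 => [|j Hj]; last by rewrite Hcol (negbTE Hj) andbF mulr0.
by rewrite Hcol !eqxx mulr1 addr0 mxE.
Qed.

Lemma arrows_injective_lift (M' M N : rep k V A) (f : 'M[k]_(rdim M', rdim M))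
    (g : 'M[k]_(rdim M, rdim N)) i (m : A -> 'rV[k]_(rdim M)) :
  is_ses f g -> arrows_injective_at N i ->
  (forall a, m a *m ridem M (s a) = m a) ->
  (\sum_(a | t a == i) m a *m rarr M a) *m g = 0 ->
  forall a, t a == i -> (m a <= f)%MS.
Proof.
move=> Hses PN Hm Hsum a Ha; apply: (ses_kerP Hses); move: a Ha.
have [_ [Hg1 Hg2 _] _ _ _] := Hses.
apply: (PN (fun a => m a *m g)) => [a|]; first by rewrite -mulmxA -Hg1 mulmxA Hm.
under eq_bigr => a _ do rewrite -mulmxA -Hg2 mulmxA.
by rewrite -mulmx_suml.
Qed.

(* Arrow-injectivity passes from the two outer terms of a short exact
   sequence to the middle one: lift the family to M' through f. *)
Lemma arrows_injective_ext (M' M N : rep k V A) (f : 'M[k]_(rdim M', rdim M))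
    (g : 'M[k]_(rdim M, rdim N)) i :
  is_ses f g -> arrows_injective_at N i -> arrows_injective_at M' i ->
  arrows_injective_at M i.
Proof.
move=> Hses PN PM' m Hm Hsum.
have Hsub : forall a, t a == i -> (m a <= f)%MS.
  by apply: (arrows_injective_lift Hses PN Hm); rewrite Hsum mul0mx.
have [[Hf1 Hf2 _] _ Hfree _ _] := Hses.
pose m' a := if t a == i then m a *m pinvmx f else 0.
have Hm'f a : t a == i -> m' a *m f = m a by move=> Ha; rewrite /m' Ha mulmxKpV ?Hsub.
have Hinj := row_free_inj Hfree.
have Hm'0 : forall a, t a == i -> m' a = 0.
  apply: PM' => [a|].
    case Ha: (t a == i); last by rewrite /m' Ha mul0mx.
    by apply: Hinj; rewrite /= -mulmxA Hf1 mulmxA Hm'f // Hm.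
  apply: Hinj => /=; rewrite mul0mx mulmx_suml -[RHS]Hsum.
  by apply: eq_bigr => a Ha; rewrite -mulmxA Hf2 mulmxA Hm'f.
by move=> a Ha; rewrite -(Hm'f a Ha) Hm'0 // mul0mx.
Qed.

Lemma arrows_injective_filtered (M : rep k V A) i :
  acyclic s t -> Dfiltered s t M -> arrows_injective_at M i.
Proof.
move=> Hac; elim=> [N _ H0 | M' N l f g _ Hses _ IH]; first exact: arrows_injective_dim0.
by apply: arrows_injective_ext Hses _ IH; apply: arrows_injective_Delta.
Qed.

End ArrowInjectivity.

Section Retraction.
Variables (k : fieldType) (V A : finType) (s t : A -> V) (i : V).
Variables (N E M : rep k V A).
Variables (f : 'M[k]_(rdim N, rdim E)) (g : 'M[k]_(rdim E, rdim M)).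
Hypotheses (HE : is_Dmod s t E) (Hses : is_ses f g).
Hypotheses (HN : concentrated_at N i) (HM : arrows_injective_at s t M i).
Hypothesis Hsink : is_sink s i.

Lemma sink_not_source a : (i == s a) = false.
Proof. by apply/negbTE; rewrite eq_sym; move/forallP: Hsink. Qed.

Lemma f_idem v : f *m ridem E v = if i == v then f else 0.
Proof.
have [[Hf1 _ _] _ _ _ _] := Hses; have [HNe _ _] := HN.
by rewrite -Hf1 HNe; case: (i == v); rewrite ?mul1mx ?mul0mx.
Qed.

Definition sink_complement : 'M[k]_(rdim E) :=
  (\sum_(v | v != i) ridem E v + \sum_a rarr E a + \sum_a rdual E a)%MS.

Local Notation J := sink_complement.

Lemma idem_sub_J v : v != i -> (ridem E v <= J)%MS.
Proof.
move=> Hv; rewrite /sink_complement.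
apply: submx_trans (addsmxSl _ _); apply: submx_trans (addsmxSl _ _).
exact: (sumsmx_sup v Hv (submx_refl _)).
Qed.

Lemma arr_sub_J a : (rarr E a <= J)%MS.
Proof.
rewrite /sink_complement; apply: submx_trans (addsmxSl _ _); apply: submx_trans (addsmxSr _ _).
exact: (sumsmx_sup a (erefl true) (submx_refl _)).
Qed.

Lemma dual_sub_J a : (rdual E a <= J)%MS.
Proof.
rewrite /sink_complement; apply: submx_trans (addsmxSr _ _).
exact: (sumsmx_sup a (erefl true) (submx_refl _)).
Qed.

(* The e_i-component of an element of J is a combination of arrows ending at
   i: reversed arrows end at sources of arrows, which differ from the sink i. *)
Lemma J_at_sink (y : 'rV[k]_(rdim E)) : (y <= J)%MS -> exists m : A -> 'rV[k]_(rdim E),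
  (forall a, m a *m ridem E (s a) = m a) /\
  y *m ridem E i = \sum_(a | t a == i) m a *m rarr E a.
Proof.
have [[He1 _ He3 He4] _] := HE.
rewrite /sink_complement; case/sub_addsmxP => [[u12 u3] /= ->].
case/sub_addsmxP: (submxMl u12 (\sum_(v | v != i) ridem E v + \sum_a rarr E a)%MS).
move=> [u1 u2] /= ->.
case/sub_sumsmxP: (submxMl u1 (\sum_(v | v != i) ridem E v)%MS) => a_ ->.
case/sub_sumsmxP: (submxMl u2 (\sum_a rarr E a)%MS) => b_ ->.
case/sub_sumsmxP: (submxMl u3 (\sum_a rdual E a)%MS) => c_ ->.
exists (fun a => b_ a *m ridem E (s a)); split=> [a|].
  by rewrite -mulmxA He1 eqxx.
rewrite !mulmxDl !mulmx_suml big1 ?add0r => [|v Hv]; last first.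
  by rewrite -mulmxA He1 (negbTE Hv) mulmx0.
rewrite [X in _ + X]big1 ?addr0 => [|a _]; last first.
  by rewrite He4 -!mulmxA He1 eq_sym sink_not_source !mulmx0.
rewrite [RHS]big_mkcond /=; apply: eq_bigr => a _.
have Hsrc : ridem E (s a) *m rarr E a = rarr E a.
  by rewrite {1}He3 !mulmxA He1 eqxx -He3.
have Htgt : rarr E a *m ridem E i = if t a == i then rarr E a else 0.
  by rewrite {1}He3 -mulmxA He1; case: eqP => _; rewrite ?mulmx0 -?He3.
by rewrite -!mulmxA Htgt Hsrc; case: (t a == i); rewrite ?mulmx0.
Qed.

(* An element y = f(x) of J
   is sum_(a : j -> i) m_a a with m_a in e_j E; its image in M vanishes, so
   arrow-injectivity of M puts every m_a in the image of f, which lies in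
   e_i E, while m_a lies in e_j E with j <> i; hence m_a = 0 and y = 0. *)
Lemma f_cap_J : (f :&: J)%MS == 0.
Proof.
apply/rowV0P => y; rewrite sub_capmx => /andP [/submxP [x ->] /J_at_sink [m [Hm Hy]]].
have Hxf : x *m f = \sum_(a | t a == i) m a *m rarr E a.
  by rewrite -Hy -mulmxA f_idem eqxx.
have Hmf : forall a, t a == i -> (m a <= f)%MS.
  apply: (arrows_injective_lift Hses HM Hm).
  by rewrite -Hxf -mulmxA (ses_comp0 Hses) mulmx0.
rewrite Hxf big1 // => a /Hmf /submxP [z Hz].
by rewrite -Hm Hz -(mulmxA z) f_idem sink_not_source mulmx0 !mul0mx.
Qed.

(* Hence f has a linear retraction vanishing on J, and it is a module
   homomorphism: on e_i it is the identity of e_i E, and every other structure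
   map of E lands in J while acting by zero on N. *)
Lemma hom_retraction :
  exists2 phi : 'M[k]_(rdim E, rdim N), is_hom phi & f *m phi = 1%:M.
Proof.
have Hfree : row_free f by case: Hses.
have [phi Hfphi HJ] := retraction_killing Hfree f_cap_J.
exists phi => //; have [HNe HNa HNd] := HN; have [[_ He2 _ _] _] := HE.
split=> [v|a|a]; last 2 first.
- by rewrite HNa mulmx0 HJ ?arr_sub_J.
- by rewrite HNd mulmx0 HJ ?dual_sub_J.
rewrite HNe; case: (eqVneq i v) => [<-|Hv]; last by rewrite mulmx0 HJ // idem_sub_J // eq_sym.
rewrite mulmx1 -{2}[phi]mul1mx -He2 mulmx_suml (bigD1 i) //= big1 ?addr0 // => w Hw.
by rewrite HJ ?idem_sub_J.
Qed.

End Retraction.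

Theorem mainTheorem9 (k : closedFieldType) (V A : finType) (s t : A -> V)
  (M : rep k V A) (i : V) :
  acyclic s t -> Dfiltered s t M -> is_sink s i ->
  Ext1_zero s t M (Delta k s t i).
Proof.
move=> Hac Hfilt Hsink E f g HE Hses.
have HN := Delta_sink_concentrated k t Hsink.
have HM := arrows_injective_filtered (i := i) Hac Hfilt.
have [phi Hphi Hfphi] := hom_retraction HE Hses HN HM Hsink.
exact: (hom_retraction_splits Hses Hfphi Hphi).
Qed.
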